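(* Let $\mathcal W$ be a cylindric wiring diagram of a bi-infinite reduced word in $\hat S_n$, lifted to the universal cover with wire and chamber labels as below, and let $\tau:\mathbb Z^n\to\mathbb R\setminus\{0\}$ be a cylindric Berenstein–Hirota–Zelevinsky datum. Suppose every crossing of $\mathcal W$ carries the weight $$a=(\alpha_i-\alpha_j)\frac{\tau(\mathbf s)\,\tau(\mathbf s+e_i+e_j)}{\tau(\mathbf s+e_i)\,\tau(\mathbf s+e_j)},$$ where $i$ and $j$ are the residues mod $n$ of the labels of the upper and lower wires of (a lift of) the crossing, $\mathbf s$ is the label of the chamber directly below it (so that the chamber directly above has label $\mathbf s+e_i+e_j$ and the two side chambers have labels $\mathbf s+e_i$, $\mathbf s+e_j$). Then after applying any finite sequence of weighted braid moves and commutation moves to $\mathcal W$, the weight of every crossing of the resulting diagram is again given by the same formula (with the chamber labels of the new diagram).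
   Context: $\hat S_n$: generators $s_0,\dots,s_{n-1}$ (indices mod $n$), relations $s_i^2=1$, $s_is_js_i=s_js_is_j$ if $i-j\equiv\pm1$, $s_is_j=s_js_i$ if $i-j\not\equiv0,\pm1\pmod n$. Wiring diagram: letters are drawn left to right on a cylinder with wires in positions $1,\dots,n$ (mod $n$), $s_i$ being a crossing of positions $i,i+1$ ($s_0$: positions $n$ and $1$); the upper wire of a crossing is the one passing from the higher to the lower position. Universal cover: positions are integers, each crossing lifting to crossings of positions $p,p+1$ for all $p\equiv i$; lifted wires are labelled by integers according to their positions at a fixed vertical line, and labels are carried along by moves. Chamber label: if $S$ is the set of labels of wires passing below a chamber, its label is $(\mathbf s_1,\dots,\mathbf s_n)$ with $\mathbf s_i=\lceil\max\{b\in S:b\equiv i \bmod n\}/n\rceil$. Each wire labelled $b$ has parameter $\alpha_{b \bmod n}$ where $\alpha_1,\dots,\alpha_n$ are fixed reals (residues taken in $\{1,\dots,n\}$). $e_1,\dots,e_n$ is the standard basis of $\mathbb Z^n$. A BHZ datum is a function $\tau:\mathbb Z^n\to\mathbb R$ such that for all $\mathbf s\in\mathbb Z^n$ and distinct $i,j,k\in\{1,\dots,n\}$: $(\alpha_i-\alpha_j)\tau(\mathbf s+e_k)\tau(\mathbf s+e_i+e_j)+(\alpha_j-\alpha_k)\tau(\mathbf s+e_i)\tau(\mathbf s+e_j+e_k)+(\alpha_k-\alpha_i)\tau(\mathbf s+e_j)\tau(\mathbf s+e_i+e_k)=0$; it is cylindric if moreover $\tau(\mathbf s+e_1+\dots+e_n)=\tau(\mathbf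 s)$ for all $\mathbf s$ (so the weight formula does not depend on the chosen lift). Weighted moves: $s_i(a)s_j(b)s_i(c)\mapsto s_j(\tfrac{bc}{a+c})s_i(a+c)s_j(\tfrac{ab}{a+c})$ if $i-j\equiv\pm1$, $s_i(a)s_j(b)\mapsto s_j(b)s_i(a)$ if $i-j\not\equiv0,\pm1\pmod n$. *)

From HB Require Import structures.
From mathcomp Require Import all_boot all_order all_algebra.
Set Implicit Arguments. Unset Strict Implicit. Unset Printing Implicit Defensive.
Import Order.TTheory GRing.Theory Num.Theory.
Local Open Scope ring_scope.

(** Residues: an integer position/label [b] has residue class [(b %% n)%Z],
    an element of {0,...,n-1}; residue class 0 plays the role of residue n.
    Coordinates of Z^n, the parameters alpha, and the letters s_0..s_{n-1}
    are all indexed by ['I_n] through these residue classes. *)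

(** Action of the generator s_i on positions of the universal cover:
    it exchanges positions p and p+1 for every p = i (mod n). *)
Definition swap (n : nat) (i : 'I_n) (p : int) : int :=
  if (p %% n)%Z == (i : nat)%:Z then p + 1
  else if (p %% n)%Z == (((i : nat)%:Z + 1) %% n)%Z then p - 1
  else p.

(** The element of \hat S_n represented by a finite word, realized
    (faithfully) as an affine permutation of Z. *)
Definition word_prod (n : nat) (l : seq 'I_n) : int -> int :=
  foldr (fun i f => fun p => swap i (f p)) id l.

Definition reduced_word (n : nat) (l : seq 'I_n) : Prop :=
  forall l' : seq 'I_n, (forall p, word_prod l' p = word_prod l p) ->
    (size l <= size l')%N.

(** A bi-infinite word (letters indexed by Z, left to right) is reduced if
    all its finite factors are reduced. *)
Definition biinf_reduced (n : nat) (w : int -> 'I_n) : Prop :=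
  forall (a : int) (k : nat), reduced_word [seq w (a + (j : nat)%:Z) | j <- iota 0 k].

Definition adjacent (n : nat) (i j : 'I_n) : Prop :=
  ((((i : nat)%:Z - (j : nat)%:Z) %% n)%Z = 1) \/
  ((((j : nat)%:Z - (i : nat)%:Z) %% n)%Z = 1).
Definition distant (n : nat) (i j : 'I_n) : Prop :=
  i <> j /\ ~ adjacent i j.

(** A weighted (lifted) wiring diagram: the word, the weights of its letters,
    and the labelling [lab t p] = label of the lifted wire occupying position
    p on the vertical line t (the line just left of letter t). *)
Record diagram (R : Type) (n : nat) := Diagram {
  word : int -> 'I_n;
  wt : int -> R;
  lab : int -> int -> int }.

Definition consistent (R : Type) (n : nat) (D : diagram R n) : Prop :=
  forall t p, lab D (t + 1) p = lab D t (swap (word D t) p).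

Definition braid_move (R : fieldType) (n : nat) (k : int)
    (D D' : diagram R n) : Prop :=
  let i := word D k in let j := word D (k + 1) in
  let a := wt D k in let b := wt D (k + 1) in let c := wt D (k + 2) in
  [/\ word D (k + 2) = i, adjacent i j & a + c != 0] /\
  [/\ word D' k = j, word D' (k + 1) = i & word D' (k + 2) = j] /\
  [/\ wt D' k = b * c / (a + c), wt D' (k + 1) = a + c &
       wt D' (k + 2) = a * b / (a + c)] /\
  (forall t, t != k -> t != k + 1 -> t != k + 2 ->
     word D' t = word D t /\ wt D' t = wt D t) /\
  consistent D' /\ (forall t p, t <= k -> lab D' t p = lab D t p).

Definition comm_move (R : fieldType) (n : nat) (k : int)
    (D D' : diagram R n) : Prop :=
  let i := word D k in let j := word D (k + 1) in
  distant i j /\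
  (word D' k = j /\ word D' (k + 1) = i) /\
  (wt D' k = wt D (k + 1) /\ wt D' (k + 1) = wt D k) /\
  (forall t, t != k -> t != k + 1 ->
     word D' t = word D t /\ wt D' t = wt D t) /\
  consistent D' /\ (forall t p, t <= k -> lab D' t p = lab D t p).

Definition move (R : fieldType) (n : nat) (D D' : diagram R n) : Prop :=
  exists k, braid_move k D D' \/ comm_move k D D'.

Inductive reachable (R : fieldType) (n : nat) (D : diagram R n) :
    diagram R n -> Prop :=
| reach_refl : reachable D D
| reach_step D1 D2 : reachable D D1 -> move D1 D2 -> reachable D D2.

Definition e_ (n : nat) (k : 'I_n) : 'rV[int]_n := delta_mx 0 k.

Definition ceil_div (m : int) (n : nat) : int := - ((- m) %/ (n : nat)%:Z)%Z.

(** [b] is the label of a wire passing below the chamber directly below the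
    lift at positions (p, p+1) of the crossing of letter t, i.e. a wire in a
    position q < p on line t. *)
Definition below_chamber (L : int -> int -> int) (t p b : int) : Prop :=
  exists q, q < p /\ L t q = b.

Definition chamber_label (n : nat) (L : int -> int -> int) (t p : int)
    (s : 'rV[int]_n) : Prop :=
  forall r : 'I_n, exists m : int,
    [/\ below_chamber L t p m, (m %% n)%Z = (r : nat)%:Z,
        (forall b, below_chamber L t p b -> (b %% n)%Z = (r : nat)%:Z -> b <= m)
      & s 0 r = ceil_div m n].

Definition BHZ_datum (R : ringType) (n : nat) (alpha : 'I_n -> R)
    (tau : 'rV[int]_n -> R) : Prop :=
  forall (s : 'rV[int]_n) (i j k : 'I_n), i != j -> j != k -> i != k ->
    (alpha i - alpha j) * tau (s + e_ k) * tau (s + e_ i + e_ j)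
  + (alpha j - alpha k) * tau (s + e_ i) * tau (s + e_ j + e_ k)
  + (alpha k - alpha i) * tau (s + e_ j) * tau (s + e_ i + e_ k) = 0.

Definition cylindric (R : Type) (n : nat) (tau : 'rV[int]_n -> R) : Prop :=
  forall s : 'rV[int]_n, tau (s + const_mx 1) = tau s.

Definition crossing_weight (R : fieldType) (n : nat) (alpha : 'I_n -> R)
    (tau : 'rV[int]_n -> R) (i j : 'I_n) (s : 'rV[int]_n) : R :=
  (alpha i - alpha j) * (tau s * tau (s + e_ i + e_ j))
    / (tau (s + e_ i) * tau (s + e_ j)).

(** The labelling of the wires
    crossing any vertical line is an [n]-periodic bijection of [Z] (an affine
    permutation), so every chamber has a well-defined label and three
    consecutive wires have distinct residues [X], [Y], [Z]. A commutation move
    changes neither the wires nor the chambers around the crossings it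
    exchanges. A braid move acts on three crossings whose weights, writing [w]
    for the crossing weight and [s] for the bottom chamber, are either
      [(w Y X s, w Z X (s + e_Y), w Z Y s)] or
      [(w Z Y (s + e_X), w Z X s, w Y X (s + e_Z))],
    and the three-term BHZ relation says exactly that the weighted braid move
    [(a, b, c) |-> (bc/(a+c), a+c, ab/(a+c))] exchanges these two triples:
    it gives [w Z X s = w Y X s + w Z Y s] together with two product
    identities. *)

From HB Require Import structures.
From mathcomp Require Import all_boot all_order all_algebra.
From mathcomp Require Import zify ring.
Import Order.TTheory GRing.Theory Num.Theory.
Local Open Scope ring_scope.

Section Development.

Variable n : nat.
Hypothesis n_ge3 : (3 <= n)%N.
Local Notation N := (n%:Z).

(** * Congruences modulo [n] *)

Lemma dvdz_subrr x : (N %| x - x)%Z.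
Proof. by rewrite subrr dvdz0. Qed.

Lemma dvdz_small c : -2 <= c <= 2 -> c != 0 -> (N %| c)%Z = false.
Proof.
move=> hc nz; apply/negbTE/negP => /dvdzP [m em].
have m0 : m = 0 by nia.
by move: nz; rewrite em m0 mul0r eqxx.
Qed.

Lemma dvdz_shift y x : (N %| y)%Z -> (N %| x)%Z = (N %| x - y)%Z.
Proof. by move=> hy; rewrite -[in LHS](subrK y x) rpredDr. Qed.

Lemma dvdz_shiftE {y x x' : int} : (N %| y)%Z -> x - x' = y ->
  (N %| x)%Z = (N %| x')%Z.
Proof. by move=> hy e; rewrite (dvdz_shift y x hy) -e opprB addrC subrK. Qed.

Lemma dvdz_eq {y x : int} : (N %| y)%Z -> x = y -> (N %| x)%Z.
Proof. by move=> hy ->. Qed.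

Lemma dvdz_near {y x : int} : (N %| y)%Z -> x != y -> -2 <= x - y <= 2 ->
  (N %| x)%Z = false.
Proof. by move=> hy nxy hxy; rewrite (@dvdz_shift y x hy) dvdz_small // subr_eq0. Qed.

Lemma ndvdz_near {y z x : int} : (N %| y)%Z -> ~~ (N %| z)%Z ->
  (x - y == z) || (x - y == - z) -> (N %| x)%Z = false.
Proof.
by move=> hy hz /orP[]/eqP e; rewrite (@dvdz_shift y x hy) e ?rpredN; apply: negbTE.
Qed.

Lemma dvdz_sub_same x y c : (N %| x - c)%Z -> (N %| y - c)%Z -> (N %| x - y)%Z.
Proof.
move=> xc yc; have -> : x - y = (x - c) - (y - c) by ring.
exact: rpredB.
Qed.

Lemma dvdz_sub_trans {x y z : int} : (N %| x - y)%Z -> (N %| y - z)%Z -> (N %| x - z)%Z.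
Proof.
move=> xy yz; have -> : x - z = (x - y) + (y - z) by ring.
exact: rpredD.
Qed.

Lemma dvdz_subS {x y z : int} : (N %| x - z)%Z -> (N %| y + 1 - z)%Z -> (N %| x - 1 - y)%Z.
Proof.
move=> xz yz; have -> : x - 1 - y = (x - z) - (y + 1 - z) by ring.
exact: rpredB.
Qed.

Lemma dvdz_window a b p : (N %| a - b)%Z -> a < p -> p - N <= b -> a <= b.
Proof.
move=> /dvdzP [k e] ap pb; have N0 : 0 < N by lia.
have : k * N < 1 * N by rewrite mul1r -e; lia.
rewrite ltr_pM2r // => k1; rewrite -subr_le0 e pmulr_lle0 //; lia.
Qed.

Lemma modz_ordP (i : 'I_n) x : (x %% N)%Z = i%:Z <-> (N %| x - i%:Z)%Z.
Proof.
have hi : 0 <= i%:Z < N by rewrite ltz_nat ltn_ord andbT.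
by rewrite -eqz_mod_dvd -{1}(modz_small hi); split => [->|/eqP].
Qed.

Lemma modz_eq1 x : (x %% N)%Z = 1 <-> (N %| x - 1)%Z.
Proof. by rewrite -eqz_mod_dvd (@modz_small 1) //; [split=> [->|/eqP] | lia]. Qed.

Lemma ord_dvdz (i j : 'I_n) : (N %| i%:Z - j%:Z)%Z -> i = j.
Proof.
move/modz_ordP; rewrite modz_small; last by rewrite ltz_nat ltn_ord andbT.
by move=> [] /val_inj.
Qed.

Lemma residue_uniq {x : int} {i j : 'I_n} :
  (N %| x - i%:Z)%Z -> (N %| x - j%:Z)%Z -> i = j.
Proof.
move=> xi xj; apply: ord_dvdz.
have -> : i%:Z - j%:Z = (x - j%:Z) - (x - i%:Z) by ring.
exact: rpredB.
Qed.

Lemma exists_residue x : exists i : 'I_n, (N %| x - i%:Z)%Z.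
Proof.
have N0 : N != 0 by rewrite eqz_nat -lt0n; lia.
have lt : (`|(x %% N)%Z| < n)%N.
  by rewrite -ltz_nat gez0_abs ?modz_ge0 ?ltz_pmod //; lia.
exists (Ordinal lt); rewrite /= gez0_abs ?modz_ge0 //.
by rewrite {1}(divz_eq x N) addrK dvdz_mull.
Qed.

Lemma adjacentP {i j : 'I_n} : adjacent i j ->
  (N %| j%:Z + 1 - i%:Z)%Z \/ (N %| i%:Z + 1 - j%:Z)%Z.
Proof.
case=> /modz_eq1 h; [left|right].
- by rewrite (_ : _ - _ = - (i%:Z - j%:Z - 1)) ?rpredN //; ring.
- by rewrite (_ : _ - _ = - (j%:Z - i%:Z - 1)) ?rpredN //; ring.
Qed.

Lemma distantP {i j : 'I_n} : distant i j ->
  [/\ ~~ (N %| i%:Z - j%:Z)%Z, ~~ (N %| i%:Z + 1 - j%:Z)%Z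
    & ~~ (N %| j%:Z + 1 - i%:Z)%Z].
Proof.
case=> ij nadj; split; apply/negP.
- by move/ord_dvdz.
- move=> h; apply: nadj; right; apply/modz_eq1.
  by rewrite (_ : _ - _ = - (i%:Z + 1 - j%:Z)) ?rpredN //; ring.
- move=> h; apply: nadj; left; apply/modz_eq1.
  by rewrite (_ : _ - _ = - (j%:Z + 1 - i%:Z)) ?rpredN //; ring.
Qed.

(* [lia] becomes very slow when several divisibility hypotheses are in the
   context. *)
Ltac clear_dvdz :=
  repeat match goal with
  | H : is_true (_ %| _)%Z |- _ => clear H
  | H : is_true (~~ (_ %| _)%Z) |- _ => clear H
  end.

(* Decides [(N %| X)%Z] from a hypothesis [(N %| Y)%Z] with [X - Y] in
   [-2, 2], or from one with [X - Y = +- Z] and [~~ (N %| Z)%Z]. *)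
Ltac dvdz_solve :=
  match goal with
  | |- is_true (N %| _)%Z =>
      match goal with H : is_true (N %| _)%Z |- _ => apply: (dvdz_eq H); clear_dvdz; lia end
  | |- is_true (~~ (N %| _)%Z) =>
      apply/negbT; match goal with
      | H : is_true (N %| _)%Z |- _ => apply: (dvdz_near H); clear_dvdz; lia
      | H : is_true (N %| _)%Z, H' : is_true (~~ (N %| _)%Z) |- _ =>
          apply: (ndvdz_near H H'); clear_dvdz; lia
      | H' : is_true (~~ (N %| _)%Z) |- _ =>
          apply: (ndvdz_near (dvdz0 _) H'); clear_dvdz; lia
      end
  end.

(** * Transpositions of the universal cover *)

(* [swap] for a letter given by any integer representative [a]. *)
Definition zswap (a q : int) : int :=
  if (N %| q - a)%Z then q + 1 else if (N %| q - a - 1)%Z then q - 1 else q.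

Lemma swapE (i : 'I_n) q : swap i q = zswap i q.
Proof.
have hi : 0 <= i%:Z < N by rewrite ltz_nat ltn_ord andbT.
rewrite /swap /zswap -(modz_small hi) !eqz_mod_dvd (modz_small hi).
by rewrite -[q - _ - 1]addrA -opprD.
Qed.

Lemma zswap_lo a q : (N %| q - a)%Z -> zswap a q = q + 1.
Proof. by rewrite /zswap => ->. Qed.

Lemma zswap_hi a q : (N %| q - a - 1)%Z -> zswap a q = q - 1.
Proof. by move=> h; rewrite /zswap h (dvdz_near h) //; lia. Qed.

Lemma zswap_id a q : ~~ (N %| q - a)%Z -> ~~ (N %| q - a - 1)%Z ->
  zswap a q = q.
Proof. by rewrite /zswap => /negbTE -> /negbTE ->. Qed.

(* Rewrites every [zswap a X] with [X] free of [zswap] to its value. *)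
Ltac zswap_eval :=
  repeat match goal with
  | |- context [zswap ?a ?X] =>
      lazymatch X with context [zswap _ _] => fail | _ => idtac end;
      first [ rewrite (@zswap_lo a X); last by dvdz_solve
            | rewrite (@zswap_hi a X); last by dvdz_solve
            | rewrite (@zswap_id a X); [| by dvdz_solve | by dvdz_solve] ]
  end.

Ltac zswap_cases q a :=
  case: (boolP (N %| q - a)%Z) => ?;
  [| case: (boolP (N %| q - a - 1)%Z) => ?;
  [| case: (boolP (N %| q - a - 2)%Z) => ?]]; zswap_eval.

Lemma zswapK a q : zswap a (zswap a q) = q.
Proof. zswap_cases q a; clear_dvdz; lia. Qed.

Lemma zswap_braid a q :
  zswap a (zswap (a + 1) (zswap a q)) =
  zswap (a + 1) (zswap a (zswap (a + 1) q)).
Proof. zswap_cases q a; clear_dvdz; lia. Qed.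

Lemma zswap_comm a b q : ~~ (N %| a - b)%Z ->
  ~~ (N %| a + 1 - b)%Z -> ~~ (N %| b + 1 - a)%Z ->
  zswap a (zswap b q) = zswap b (zswap a q).
Proof.
move=> ab ab1 ba1.
case: (boolP (N %| q - a)%Z) => ?;
  [| case: (boolP (N %| q - a - 1)%Z) => ?;
  [| case: (boolP (N %| q - b)%Z) => ?;
  [| case: (boolP (N %| q - b - 1)%Z) => ?]]]; zswap_eval; clear_dvdz; lia.
Qed.

Lemma zswapDn a q : zswap a (q + N) = zswap a q + N.
Proof.
rewrite /zswap (dvdz_shiftE (dvdzz N) (_ : q + N - a - (q - a) = N)); last by ring.
rewrite (dvdz_shiftE (dvdzz N) (_ : q + N - a - 1 - (q - a - 1) = N)); last by ring.
by do 2?case: ifP => _; ring.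
Qed.

Lemma eq_zswap a b q : (N %| a - b)%Z -> zswap b q = zswap a q.
Proof.
move=> ab; rewrite /zswap (dvdz_shiftE ab (_ : q - b - (q - a) = a - b)); last by ring.
by rewrite (dvdz_shiftE ab (_ : q - b - 1 - (q - a - 1) = a - b)) //; ring.
Qed.

Lemma zswap_dvdz a q q' : (N %| q - q')%Z -> (N %| zswap a q - zswap a q')%Z.
Proof.
move=> qq'; rewrite /zswap (dvdz_shiftE qq' (_ : q - a - (q' - a) = q - q')); last by ring.
rewrite (dvdz_shiftE qq' (_ : q - a - 1 - (q' - a - 1) = q - q')); last by ring.
by do 2?case: ifP => _; apply: (dvdz_eq qq'); ring.
Qed.

Lemma zswap_lt a r p : r < p -> ~~ (N %| p - a - 1)%Z -> zswap a r < p.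
Proof.
rewrite /zswap => rp pa; case: ifP => [ra|_]; last by case: ifP; lia.
have : r + 1 != p.
  by apply: contraNneq pa => <-; rewrite (_ : r + 1 - a - 1 = r - a) //; ring.
lia.
Qed.

(** * Affine permutations and chamber labels *)

Definition affine_perm (f : int -> int) : Prop :=
  [/\ forall q, f (q + N) = f q + N,
      forall q q', (N %| f q - f q')%Z -> (N %| q - q')%Z
    & forall r, exists q, (N %| f q - r)%Z].

Lemma affine_permMn f q k : (forall q, f (q + N) = f q + N) ->
  f (q + k * N) = f q + k * N.
Proof.
move=> fN; have fnat (m : nat) x : f (x + m%:Z * N) = f x + m%:Z * N.
  elim: m x => [|m IH] x; first by rewrite mul0r !addr0.
  by rewrite intS mulrDl mul1r addrA IH fN; ring.
case: k => m; first exact: fnat.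
have := fnat m.+1 (q + Negz m * N).
by rewrite (_ : _ + _ + _ = q) => [->|]; rewrite NegzE; ring.
Qed.

Lemma affine_permBn f q : (forall q, f (q + N) = f q + N) -> f (q - N) = f q - N.
Proof. by move=> fN; have := @affine_permMn f q (-1) fN; rewrite mulN1r. Qed.

Lemma affine_perm_mono f q q' : affine_perm f -> (N %| q' - q)%Z -> q <= q' ->
  f q <= f q'.
Proof.
case=> fN _ _ /dvdzP [k e] qq'.
rewrite (_ : q' = q + k * N); last by rewrite -e addrC subrK.
by rewrite affine_permMn // lerDl -e subr_ge0.
Qed.

Lemma eq_affine_perm {f g : int -> int} : f =1 g -> affine_perm f -> affine_perm g.
Proof.
move=> fg [fN finj fsurj]; split=> [q|q q'|r]; rewrite -?fg //; first exact: finj.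
by have [q fq] := fsurj r; exists q; rewrite -fg.
Qed.

Lemma affine_perm_id : affine_perm id.
Proof. by split=> // r; exists r; rewrite subrr dvdz0. Qed.

Lemma affine_perm_zswap f a : affine_perm f -> affine_perm (fun q => f (zswap a q)).
Proof.
case=> fN finj fsurj; split=> [q|q q' /finj|r].
- by rewrite zswapDn fN.
- by move=> /(zswap_dvdz a); rewrite !zswapK.
- by have [q fq] := fsurj r; exists (zswap a q); rewrite zswapK.
Qed.

Lemma affine_perm_residue_neq {f a b} {i j : 'I_n} : affine_perm f ->
  (N %| f a - i%:Z)%Z -> (N %| f b - j%:Z)%Z -> ~~ (N %| a - b)%Z -> i != j.
Proof.
case=> _ finj _ ai bj; apply: contraNneq => ij; apply: finj.
by apply: dvdz_sub_same ai _; rewrite ij.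
Qed.

Lemma chamber_label_ext L t p L' t' p' (s : 'rV[int]_n) :
  (forall b, below_chamber L t p b <-> below_chamber L' t' p' b) ->
  chamber_label L t p s -> chamber_label L' t' p' s.
Proof.
move=> LL' hs r; have [m [mb mr mmax sm]] := hs r.
by exists m; split=> // [|b /LL']; [apply/LL' | apply: mmax].
Qed.

Lemma chamber_label_eq {L L' t t' p} {s : 'rV[int]_n} :
  L' t' =1 L t -> chamber_label L t p s -> chamber_label L' t' p s.
Proof.
move=> LL'; apply: chamber_label_ext => b.
by split=> -[q [qp <-]]; exists q; rewrite LL'.
Qed.

Lemma chamber_label_uniq {L t p} {s s' : 'rV[int]_n} :
  chamber_label L t p s -> chamber_label L t p s' -> s = s'.
Proof.
move=> hs hs'; apply/rowP => r.
have [m [mb mr mmax ->]] := hs r; have [m' [mb' mr' mmax' ->]] := hs' r.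
by have := mmax _ mb' mr'; have := mmax' _ mb mr; move=> *; congr ceil_div; lia.
Qed.

Lemma chamber_label_exists L t p : affine_perm (L t) ->
  exists s : 'rV[int]_n, chamber_label L t p s.
Proof.
move=> Lt; have [LN Linj Lsurj] := Lt.
have N0 : 0 < N by lia.
have [q0 q0r] : exists q0 : 'I_n -> int, forall r : 'I_n, (N %| L t (q0 r) - r%:Z)%Z.
  by exists (fun r => xchoose (Lsurj r%:Z)) => r; exact: (xchooseP (Lsurj r%:Z)).
have [q1 q1_win q1_res] : exists2 q1 : 'I_n -> int,
    forall r, p - N <= q1 r < p & forall r, (N %| L t (q1 r) - r%:Z)%Z.
  exists (fun r => q0 r + ((p - 1 - q0 r) %/ N)%Z * N) => r.
    have := divz_eq (p - 1 - q0 r) N; have := ltz_pmod (p - 1 - q0 r) N0.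
    by have := @modz_ge0 (p - 1 - q0 r) N (lt0r_neq0 N0); lia.
  rewrite affine_permMn // (_ : _ - _ = L t (q0 r) - r%:Z + ((p - 1 - q0 r) %/ N)%Z * N).
    by rewrite rpredD ?dvdz_mull.
  by ring.
exists (\row_r ceil_div (L t (q1 r)) n) => r; exists (L t (q1 r)); split.
- by have /andP[_ q1p] := q1_win r; exists (q1 r).
- exact/modz_ordP.
- move=> _ [q [qp <-]] /modz_ordP qr.
  have qq1 : (N %| q - q1 r)%Z by apply: Linj; apply: dvdz_sub_same qr (q1_res r).
  have qle : q <= q1 r by apply: dvdz_window qq1 qp _; case/andP: (q1_win r).
  by apply: affine_perm_mono Lt _ qle; rewrite -opprB rpredN.
- by rewrite mxE.
Qed.

Lemma ceil_divBn x : ceil_div (x - N) n = ceil_div x n - 1.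
Proof.
rewrite /ceil_div opprB addrC divzDr ?dvdzz // divzz.
by rewrite (_ : (N != 0) = true); [rewrite opprD | apply/eqP; lia].
Qed.

Lemma chamber_labelS {L t p s} {j : 'I_n} : affine_perm (L t) ->
  chamber_label L t p s -> (N %| L t p - j%:Z)%Z ->
  chamber_label L t (p + 1) (s + e_ j).
Proof.
move=> Lt hs pj r; have [LN Linj _] := Lt.
have [_ [[q [qp <-]] /modz_ordP qr qmax sq]] := hs r.
have [rj | rj] := eqVneq r j.
- rewrite -rj in pj *.
  have pN_r : (N %| L t (p - N) - r%:Z)%Z.
    rewrite affine_permBn // (_ : _ - _ = L t p - r%:Z - N); last by ring.
    exact: rpredB pj (dvdzz N).
  have Lq : L t q = L t p - N.
    have ge : L t (p - N) <= L t q.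
      by apply: qmax; [exists (p - N); split; [lia|] | apply/modz_ordP].
    have le : L t q <= L t (p - N).
      have qpN : (N %| q - (p - N))%Z by apply: Linj; exact: dvdz_sub_same qr pN_r.
      have qle : q <= p - N by apply: dvdz_window qpN qp _; lia.
      by apply: affine_perm_mono Lt _ qle; rewrite -opprB rpredN.
    by move: ge le; rewrite affine_permBn //; lia.
  exists (L t p); split.
  + by exists p; split; [lia|].
  + exact/modz_ordP.
  + move=> _ [q' [q'p <-]] q'r; have [->//|q'p'] := eqVneq q' p.
    have : L t q' <= L t q by apply: qmax q'r; exists q'; split; [lia|].
    lia.
  + by rewrite /e_ !mxE !eqxx sq Lq ceil_divBn subrK.
- exists (L t q); split.
  + by exists q; split; [lia|].
  + exact/modz_ordP.
  + move=> _ [q' [q'p <-]] q'r; have [eqp|q'p'] := eqVneq q' p.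
      by move: q'r; rewrite eqp => /modz_ordP/(residue_uniq pj) jr; rewrite jr eqxx in rj.
    by apply: qmax q'r; exists q'; split; [lia|].
  + by rewrite /e_ !mxE eqxx (negbTE rj) addr0.
Qed.

(** * Lifted wiring diagrams *)

Section Diagram.
Context {R : Type} {F : diagram R n}.
Hypothesis F_cons : consistent F.

Lemma lab_next {t a : int} q : (N %| a - (word F t)%:Z)%Z ->
  lab F (t + 1) q = lab F t (zswap a q).
Proof. by move=> aw; rewrite F_cons swapE (eq_zswap _ _ _ aw). Qed.

Lemma lab_next3 {t a b c : int} q : (N %| a - (word F t)%:Z)%Z ->
  (N %| b - (word F (t + 1))%:Z)%Z -> (N %| c - (word F (t + 2))%:Z)%Z ->
  lab F (t + 3) q = lab F t (zswap a (zswap b (zswap c q))).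
Proof.
move=> aw bw cw; rewrite (_ : t + 3 = t + 2 + 1); last by ring.
rewrite (lab_next _ cw) (_ : t + 2 = t + 1 + 1); last by ring.
by rewrite (lab_next _ bw) (lab_next _ aw).
Qed.

Lemma affine_perm_lab t0 : affine_perm (lab F t0) -> forall t, affine_perm (lab F t).
Proof.
move=> L0 t; rewrite -(subrK t0 t); elim/int_rect: (t - t0) => [|m IH|m IH].
- by rewrite add0r.
- rewrite (_ : _ + t0 = m%:Z + t0 + 1); last by rewrite intS; ring.
  apply: (eq_affine_perm _ (affine_perm_zswap _ (word F (m%:Z + t0)) IH)) => q.
  by rewrite (lab_next _ (dvdz_subrr _)).
- rewrite (_ : - m%:Z + t0 = - m.+1%:Z + t0 + 1) in IH; last by rewrite intS; ring.
  apply: (eq_affine_perm _ (affine_perm_zswap _ (word F (- m.+1%:Z + t0)) IH)) => q.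
  by rewrite (lab_next _ (dvdz_subrr _)) zswapK.
Qed.

Lemma chamber_label_next t a p (s : 'rV[int]_n) : (N %| a - (word F t)%:Z)%Z ->
  ~~ (N %| p - a - 1)%Z ->
  chamber_label (lab F) (t + 1) p s <-> chamber_label (lab F) t p s.
Proof.
move=> aw pa.
have below b : below_chamber (lab F) (t + 1) p b <-> below_chamber (lab F) t p b.
  split=> -[q [qp <-]]; exists (zswap a q).
    by rewrite (lab_next _ aw); split=> //; apply: zswap_lt.
  by rewrite (lab_next _ aw) zswapK; split=> //; apply: zswap_lt.
by split; apply: chamber_label_ext => b; rewrite below.
Qed.

End Diagram.

Lemma eq_lab_affine_perm {R : Type} {E E' : diagram R n} {k : int} : consistent E' ->
  lab E' k =1 lab E k -> (forall t, affine_perm (lab E t)) ->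
  forall t, affine_perm (lab E' t).
Proof.
move=> E'_cons lab_k E_aff; apply: (affine_perm_lab E'_cons k).
by apply: eq_affine_perm (E_aff k) => q; rewrite lab_k.
Qed.

Lemma eq_lab_from {R : Type} {E E' : diagram R n} {t1 : int} :
  consistent E -> consistent E' ->
  lab E' t1 =1 lab E t1 -> (forall t, t1 <= t -> word E' t = word E t) ->
  forall t, t1 <= t -> lab E' t =1 lab E t.
Proof.
move=> E_cons E'_cons L1 w.
have step (m : nat) : lab E' (t1 + m%:Z) =1 lab E (t1 + m%:Z).
  elim: m => [|m IH] q; first by rewrite addr0.
  rewrite (_ : t1 + m.+1%:Z = t1 + m%:Z + 1); last by rewrite intS; ring.
  by rewrite E'_cons E_cons IH w //; lia.
move=> t t1t; have -> : t = t1 + `|t - t1|%N%:Z by lia.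
exact: step.
Qed.

(** * Crossing weights *)

(* [crossing_weight] with the values of [alpha] and [tau] abstracted. *)
Definition weight_ratio (R : fieldType) (a b t0 tab ta tb : R) : R :=
  (a - b) * (t0 * tab) / (ta * tb).

(* [T0], [Tx], [Txy], ... stand for [tau s], [tau (s + e_X)],
   [tau (s + e_X + e_Y)], ... *)
Lemma weight_ratio_identities {R : fieldType} (aX aY aZ : R)
    {T0 Tx Ty Tz Txy Txz Tyz Txyz : R} :
  T0 != 0 -> Tx != 0 -> Ty != 0 -> Tz != 0 ->
  Txy != 0 -> Txz != 0 -> Tyz != 0 -> Txyz != 0 ->
  (aX - aY) * Tz * Txy + (aY - aZ) * Tx * Tyz + (aZ - aX) * Ty * Txz = 0 ->
  let w := @weight_ratio R in
  [/\ w aZ aX T0 Txz Tz Tx = w aY aX T0 Txy Ty Tx + w aZ aY T0 Tyz Tz Ty,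
      w aZ aY Tx Txyz Txz Txy * w aZ aX T0 Txz Tz Tx
        = w aZ aX Ty Txyz Tyz Txy * w aZ aY T0 Tyz Tz Ty,
      w aY aX Tz Txyz Tyz Txz * w aZ aX T0 Txz Tz Tx
        = w aY aX T0 Txy Ty Tx * w aZ aX Ty Txyz Tyz Txy &
      w aZ aX Ty Txyz Tyz Txy
        = w aZ aY Tx Txyz Txz Txy + w aY aX Tz Txyz Tyz Txz].
Proof.
move=> h0 hx hy hz hxy hxz hyz hxyz bhz w; rewrite /w /weight_ratio.
split; apply/eqP; rewrite -subr_eq0; apply/eqP.
- rewrite (_ : _ - _ = T0 / (Tx * Ty * Tz) *
    ((aX - aY) * Tz * Txy + (aY - aZ) * Tx * Tyz + (aZ - aX) * Ty * Txz)).
    by rewrite bhz mulr0.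
  by field; rewrite ?hx ?hy ?hz ?h0 ?hxy ?hxz ?hyz ?hxyz.
- by field; rewrite ?hx ?hy ?hz ?h0 ?hxy ?hxz ?hyz ?hxyz.
- by field; rewrite ?hx ?hy ?hz ?h0 ?hxy ?hxz ?hyz ?hxyz.
- rewrite (_ : _ - _ = Txyz / (Txy * Txz * Tyz) *
    ((aX - aY) * Tz * Txy + (aY - aZ) * Tx * Tyz + (aZ - aX) * Ty * Txz)).
    by rewrite bhz mulr0.
  by field; rewrite ?hx ?hy ?hz ?h0 ?hxy ?hxz ?hyz ?hxyz.
Qed.

Section Weights.

Variables (R : fieldType) (alpha : 'I_n -> R) (tau : 'rV[int]_n -> R).
Hypotheses (tau_neq0 : forall s, tau s != 0) (tau_bhz : BHZ_datum alpha tau).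
Local Notation cw := (crossing_weight alpha tau).

Lemma crossing_weight_identities {X Y Z : 'I_n} (s : 'rV[int]_n) :
  X != Y -> Y != Z -> X != Z ->
  [/\ cw Z X s = cw Y X s + cw Z Y s,
      cw Z Y (s + e_ X) * cw Z X s = cw Z X (s + e_ Y) * cw Z Y s,
      cw Y X (s + e_ Z) * cw Z X s = cw Y X s * cw Z X (s + e_ Y) &
      cw Z X (s + e_ Y) = cw Z Y (s + e_ X) + cw Y X (s + e_ Z)].
Proof.
move=> XY YZ XZ.
have := weight_ratio_identities (alpha X) (alpha Y) (alpha Z)
  (tau_neq0 s) (tau_neq0 (s + e_ X)) (tau_neq0 (s + e_ Y)) (tau_neq0 (s + e_ Z))
  (tau_neq0 (s + e_ X + e_ Y)) (tau_neq0 (s + e_ X + e_ Z))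
  (tau_neq0 (s + e_ Y + e_ Z)) (tau_neq0 (s + e_ X + e_ Y + e_ Z))
  (tau_bhz s X Y Z XY YZ XZ).
rewrite /crossing_weight /weight_ratio => ids.
have v1 : s + e_ Z + e_ X = s + e_ X + e_ Z by rewrite addrAC.
have v2 : s + e_ Y + e_ X = s + e_ X + e_ Y by rewrite addrAC.
have v3 : s + e_ Z + e_ Y = s + e_ Y + e_ Z by rewrite addrAC.
have v4 : s + e_ X + e_ Z + e_ Y = s + e_ X + e_ Y + e_ Z by rewrite addrAC.
have v5 : s + e_ Y + e_ Z + e_ X = s + e_ X + e_ Y + e_ Z.
  by rewrite addrAC (addrAC s).
have v6 : s + e_ Z + e_ Y + e_ X = s + e_ X + e_ Y + e_ Z.
  by rewrite addrAC (addrAC s) addrAC.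
by rewrite v4 v5 v6 v1 v2 v3.
Qed.

Lemma braid_weights_up {X Y Z : 'I_n} (s : 'rV[int]_n) :
  X != Y -> Y != Z -> X != Z ->
  let a := cw Y X s in let b := cw Z X (s + e_ Y) in let c := cw Z Y s in
  a + c != 0 ->
  [/\ b * c / (a + c) = cw Z Y (s + e_ X), a + c = cw Z X s
    & a * b / (a + c) = cw Y X (s + e_ Z)].
Proof.
move=> XY YZ XZ a b c; have [id1 id2 id3 _] := crossing_weight_identities s XY YZ XZ.
by rewrite /a /b /c -id1 => nz; rewrite -id2 -id3 !mulfK.
Qed.

Lemma braid_weights_down {X Y Z : 'I_n} (s : 'rV[int]_n) :
  X != Y -> Y != Z -> X != Z ->
  let a := cw Z Y (s + e_ X) in let b := cw Z X s in let c := cw Y X (s + e_ Z) in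
  a + c != 0 ->
  [/\ b * c / (a + c) = cw Y X s, a + c = cw Z X (s + e_ Y)
    & a * b / (a + c) = cw Z Y s].
Proof.
move=> XY YZ XZ a b c; have [_ id2 id3 id4] := crossing_weight_identities s XY YZ XZ.
rewrite /a /b /c -id4 => nz.
by rewrite [cw Z X s * _]mulrC id3 id2 [cw Z X (s + e_ Y) * _]mulrC !mulfK.
Qed.

Definition weighted_at (F : diagram R n) (t p : int) : Prop :=
  forall (i j : 'I_n) (s : 'rV[int]_n),
    (N %| lab F t (p + 1) - i%:Z)%Z -> (N %| lab F t p - j%:Z)%Z ->
    chamber_label (lab F) t p s -> wt F t = cw i j s.

Definition weighted (F : diagram R n) : Prop :=
  forall t p, (N %| p - (word F t)%:Z)%Z -> weighted_at F t p.

Lemma weighted_atE {F t p} {i j : 'I_n} {s : 'rV[int]_n} :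
  (N %| lab F t (p + 1) - i%:Z)%Z -> (N %| lab F t p - j%:Z)%Z ->
  chamber_label (lab F) t p s -> weighted_at F t p <-> wt F t = cw i j s.
Proof.
move=> pi pj ps; split=> [|w i' j' s' pi' pj' ps']; first exact.
by rewrite w (residue_uniq pi pi') (residue_uniq pj pj') (chamber_label_uniq ps ps').
Qed.

Lemma weighted_at_transfer {F F' t t' p} : wt F' t' = wt F t ->
  lab F' t' (p + 1) = lab F t (p + 1) -> lab F' t' p = lab F t p ->
  (forall s : 'rV[int]_n, chamber_label (lab F') t' p s -> chamber_label (lab F) t p s) ->
  weighted_at F t p -> weighted_at F' t' p.
Proof.
move=> w l1 l0 ch ok i j s; rewrite w l1 l0 => pi pj /ch; exact: ok.
Qed.

(* Three consecutive crossings [s_a s_(a+1) s_a] ("up") or [s_(a+1) s_a s_(a+1)]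
   ("down") at positions [q], [q + 1], [q + 2], whose wires have residues [X],
   [Y], [Z] on the line [k] to their left. *)
Section Window.
Context {F : diagram R n} {k a q : int} {X Y Z : 'I_n} {s : 'rV[int]_n}.
Hypotheses (F_cons : consistent F) (F_aff : forall t, affine_perm (lab F t)).
Hypotheses (qa : (N %| q - a)%Z) (qs : chamber_label (lab F) k q s).
Hypotheses (qX : (N %| lab F k q - X%:Z)%Z) (qY : (N %| lab F k (q + 1) - Y%:Z)%Z)
  (qZ : (N %| lab F k (q + 2) - Z%:Z)%Z).
Let k2 : k + 2 = k + 1 + 1. Proof. by ring. Qed.
Let q2 : q + 1 + 1 = q + 2. Proof. by ring. Qed.

Lemma window_up : (N %| a - (word F k)%:Z)%Z -> (N %| a + 1 - (word F (k + 1))%:Z)%Z ->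
  [/\ weighted_at F k q <-> wt F k = cw Y X s,
      weighted_at F (k + 1) (q + 1) <-> wt F (k + 1) = cw Z X (s + e_ Y) &
      weighted_at F (k + 2) q <-> wt F (k + 2) = cw Z Y s].
Proof.
move=> a0 a1.
have L1 r : lab F (k + 1) r = lab F k (zswap a r) := lab_next F_cons r a0.
have L2 r : lab F (k + 2) r = lab F k (zswap a (zswap (a + 1) r)).
  by rewrite k2 (lab_next F_cons _ a1) L1.
have qa1 : ~~ (N %| q - a - 1)%Z by dvdz_solve.
have qa2 : ~~ (N %| q - (a + 1) - 1)%Z by dvdz_solve.
have s1 : chamber_label (lab F) (k + 1) q s.
  by apply/(chamber_label_next F_cons _ _ _ _ a0 qa1).
have s1' : chamber_label (lab F) (k + 1) (q + 1) (s + e_ Y).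
  by apply: (chamber_labelS (F_aff _) s1); rewrite L1; zswap_eval.
have s2 : chamber_label (lab F) (k + 2) q s.
  by rewrite k2; apply/(chamber_label_next F_cons _ _ _ _ a1 qa2).
split.
- exact: weighted_atE qY qX qs.
- by apply: (weighted_atE _ _ s1'); rewrite L1; zswap_eval; rewrite ?q2 ?addrK.
- by apply: (weighted_atE _ _ s2); rewrite L2; zswap_eval; rewrite ?q2.
Qed.

Lemma window_down : (N %| a + 1 - (word F k)%:Z)%Z -> (N %| a - (word F (k + 1))%:Z)%Z ->
  [/\ weighted_at F k (q + 1) <-> wt F k = cw Z Y (s + e_ X),
      weighted_at F (k + 1) q <-> wt F (k + 1) = cw Z X s &
      weighted_at F (k + 2) (q + 1) <-> wt F (k + 2) = cw Y X (s + e_ Z)].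
Proof.
move=> a0 a1.
have L1 r : lab F (k + 1) r = lab F k (zswap (a + 1) r) := lab_next F_cons r a0.
have L2 r : lab F (k + 2) r = lab F k (zswap (a + 1) (zswap a r)).
  by rewrite k2 (lab_next F_cons _ a1) L1.
have qa1 : ~~ (N %| q - a - 1)%Z by dvdz_solve.
have qa2 : ~~ (N %| q - (a + 1) - 1)%Z by dvdz_solve.
have s0' : chamber_label (lab F) k (q + 1) (s + e_ X).
  by apply: chamber_labelS (F_aff _) qs qX.
have s1 : chamber_label (lab F) (k + 1) q s.
  by apply/(chamber_label_next F_cons _ _ _ _ a0 qa2).
have s2' : chamber_label (lab F) (k + 2) (q + 1) (s + e_ Z).
  apply: (chamber_labelS (F_aff _)).
    by rewrite k2; apply/(chamber_label_next F_cons _ _ _ _ a1 qa1).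
  by rewrite L2; zswap_eval; rewrite q2.
split.
- by apply: (weighted_atE _ qY s0'); rewrite q2.
- by apply: (weighted_atE _ _ s1); rewrite L1; zswap_eval; rewrite ?q2.
- by apply: (weighted_atE _ _ s2'); rewrite L2; zswap_eval; rewrite ?addrK ?q2.
Qed.

End Window.

Lemma weighted_at_same_column {F F' t p} : word F' t = word F t -> wt F' t = wt F t ->
  lab F' t =1 lab F t -> weighted F -> (N %| p - (word F' t)%:Z)%Z -> weighted_at F' t p.
Proof.
move=> w wt_t l F_ok; rewrite w => /F_ok; apply: weighted_at_transfer; rewrite ?l //.
by move=> s; apply: chamber_label_eq => q; rewrite l.
Qed.

(** * Braid and commutation moves *)

Section BraidMove.
Context {E E' : diagram R n} {k : int}.
Hypotheses (E_cons : consistent E) (E_aff : forall t, affine_perm (lab E t)).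
Hypotheses (E_ok : weighted E) (Emove : braid_move k E E').
Let E'_cons : consistent E'. Proof. by case: Emove => _ [_ [_ [_ []]]]. Qed.
Let lab_before t : t <= k -> lab E' t =1 lab E t.
Proof. by case: Emove => _ [_ [_ [_ [_ lab_le]]]] tk q; apply: lab_le. Qed.
Let lab_k : lab E' k =1 lab E k. Proof. exact: lab_before. Qed.
Let same_off t : t < k \/ k + 3 <= t -> word E' t = word E t /\ wt E' t = wt E t.
Proof. by case: Emove => _ [_ [_ [same _]]] tk; apply: same; apply/eqP; lia. Qed.

Lemma braid_move_affine t : affine_perm (lab E' t).
Proof. exact: eq_lab_affine_perm E'_cons lab_k E_aff t. Qed.

Let residues q : exists X Y Z : 'I_n, [/\ (N %| lab E k q - X%:Z)%Z,
  (N %| lab E k (q + 1) - Y%:Z)%Z, (N %| lab E k (q + 2) - Z%:Z)%Z &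
  [/\ X != Y, Y != Z & X != Z]].
Proof.
have [X qX] := exists_residue (lab E k q).
have [Y qY] := exists_residue (lab E k (q + 1)).
have [Z qZ] := exists_residue (lab E k (q + 2)).
exists X, Y, Z; split=> //; split.
- by apply: (affine_perm_residue_neq (E_aff k) qX qY); rewrite dvdz_small //; lia.
- by apply: (affine_perm_residue_neq (E_aff k) qY qZ); rewrite dvdz_small //; lia.
- by apply: (affine_perm_residue_neq (E_aff k) qX qZ); rewrite dvdz_small //; lia.
Qed.

Lemma braid_move_up {a q : int} : (N %| a - (word E k)%:Z)%Z ->
  (N %| a + 1 - (word E (k + 1))%:Z)%Z -> (N %| q - a)%Z ->
  [/\ weighted_at E' k (q + 1), weighted_at E' (k + 1) q & weighted_at E' (k + 2) (q + 1)].
Proof.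
move=> a0 a1 qa; have [[w2 _ nz] [[w'0 w'1 _] [[wt0 wt1 wt2] _]]] := Emove.
have [s qs] := chamber_label_exists _ _ q (E_aff k).
have [X [Y [Z [qX qY qZ [XY YZ XZ]]]]] := residues q.
have [okE0 okE1 okE2] := window_up E_cons E_aff qa qs qX qY qZ a0 a1.
have q1a1 : (N %| q + 1 - (a + 1))%Z by apply: (dvdz_eq qa); ring.
have wa : wt E k = cw Y X s by apply/okE0/E_ok; apply: dvdz_sub_trans qa a0.
have wb : wt E (k + 1) = cw Z X (s + e_ Y).
  by apply/okE1/E_ok; apply: dvdz_sub_trans q1a1 a1.
have wc : wt E (k + 2) = cw Z Y s.
  by apply/okE2/E_ok; rewrite w2; apply: dvdz_sub_trans qa a0.
rewrite wa wc in nz; have [W0 W1 W2] := braid_weights_up s XY YZ XZ nz.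
have qs' := chamber_label_eq lab_k qs.
rewrite -!lab_k in qX qY qZ; rewrite -w'0 in a1; rewrite -w'1 in a0.
have [ok0 ok1 ok2] := window_down E'_cons braid_move_affine qa qs' qX qY qZ a1 a0.
by split; [apply/ok0 | apply/ok1 | apply/ok2]; rewrite ?wt0 ?wt1 ?wt2 ?wa ?wb ?wc.
Qed.

Lemma braid_move_down {a q : int} : (N %| a + 1 - (word E k)%:Z)%Z ->
  (N %| a - (word E (k + 1))%:Z)%Z -> (N %| q - a)%Z ->
  [/\ weighted_at E' k q, weighted_at E' (k + 1) (q + 1) & weighted_at E' (k + 2) q].
Proof.
move=> a0 a1 qa; have [[w2 _ nz] [[w'0 w'1 _] [[wt0 wt1 wt2] _]]] := Emove.
have [s qs] := chamber_label_exists _ _ q (E_aff k).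
have [X [Y [Z [qX qY qZ [XY YZ XZ]]]]] := residues q.
have [okE0 okE1 okE2] := window_down E_cons E_aff qa qs qX qY qZ a0 a1.
have q1a1 : (N %| q + 1 - (a + 1))%Z by apply: (dvdz_eq qa); ring.
have wa : wt E k = cw Z Y (s + e_ X) by apply/okE0/E_ok; apply: dvdz_sub_trans q1a1 a0.
have wb : wt E (k + 1) = cw Z X s by apply/okE1/E_ok; apply: dvdz_sub_trans qa a1.
have wc : wt E (k + 2) = cw Y X (s + e_ Z).
  by apply/okE2/E_ok; rewrite w2; apply: dvdz_sub_trans q1a1 a0.
rewrite wa wc in nz; have [W0 W1 W2] := braid_weights_down s XY YZ XZ nz.
have qs' := chamber_label_eq lab_k qs.
rewrite -!lab_k in qX qY qZ; rewrite -w'0 in a1; rewrite -w'1 in a0.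
have [ok0 ok1 ok2] := window_up E'_cons braid_move_affine qa qs' qX qY qZ a1 a0.
by split; [apply/ok0 | apply/ok1 | apply/ok2]; rewrite ?wt0 ?wt1 ?wt2 ?wa ?wb ?wc.
Qed.

Lemma braid_move_lab_far t : k + 3 <= t -> lab E' t =1 lab E t.
Proof.
have [[w2 adj _] [[w'0 w'1 w'2] _]] := Emove.
apply: (eq_lab_from E_cons E'_cons) => [q | t' kt'].
  2: by case: (same_off t' (or_intror kt')).
have u2 : (N %| (word E k)%:Z - (word E (k + 2))%:Z)%Z by rewrite w2 dvdz_subrr.
have v'0 : (N %| (word E (k + 1))%:Z - (word E' k)%:Z)%Z by rewrite w'0 dvdz_subrr.
have u'1 : (N %| (word E k)%:Z - (word E' (k + 1))%:Z)%Z by rewrite w'1 dvdz_subrr.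
have v'2 : (N %| (word E (k + 1))%:Z - (word E' (k + 2))%:Z)%Z by rewrite w'2 dvdz_subrr.
have [down|up] := adjacentP adj.
- have d'1 : (N %| (word E (k + 1))%:Z + 1 - (word E' (k + 1))%:Z)%Z by rewrite w'1.
  have d2 : (N %| (word E (k + 1))%:Z + 1 - (word E (k + 2))%:Z)%Z by rewrite w2.
  rewrite (lab_next3 E'_cons q v'0 d'1 v'2) (lab_next3 E_cons q down (dvdz_subrr _) d2).
  by rewrite lab_k zswap_braid.
- have p'0 : (N %| (word E k)%:Z + 1 - (word E' k)%:Z)%Z by rewrite w'0.
  have p'2 : (N %| (word E k)%:Z + 1 - (word E' (k + 2))%:Z)%Z by rewrite w'2.
  rewrite (lab_next3 E'_cons q p'0 u'1 p'2) (lab_next3 E_cons q (dvdz_subrr _) up u2).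
  by rewrite lab_k zswap_braid.
Qed.

Lemma braid_move_window t p : k <= t <= k + 2 ->
  (N %| p - (word E' t)%:Z)%Z -> weighted_at E' t p.
Proof.
have [[_ adj _] [[w'0 w'1 w'2] _]] := Emove.
move=> /andP[kt tk]; have [->|[->|->]] : t = k \/ t = k + 1 \/ t = k + 2 by lia.
all: have [down|up] := adjacentP adj.
- by rewrite w'0 => pw; have [] := braid_move_down down (dvdz_subrr _) pw.
- rewrite w'0 => pw; have [ok _ _] := braid_move_up (dvdz_subrr _) up (dvdz_subS pw up).
  by rewrite subrK in ok.
- rewrite w'1 => pw.
  have [_ ok _] := braid_move_down down (dvdz_subrr _) (dvdz_subS pw down).
  by rewrite subrK in ok.
- by rewrite w'1 => pw; have [] := braid_move_up (dvdz_subrr _) up pw.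
- by rewrite w'2 => pw; have [] := braid_move_down down (dvdz_subrr _) pw.
- rewrite w'2 => pw; have [_ _ ok] := braid_move_up (dvdz_subrr _) up (dvdz_subS pw up).
  by rewrite subrK in ok.
Qed.

Lemma braid_move_weighted : weighted E'.
Proof.
move=> t p; have [tk|kt] := ltrP t k.
  have [w wt_t] := same_off t (or_introl tk).
  have l : lab E' t =1 lab E t by apply: lab_before; lia.
  exact: weighted_at_same_column w wt_t l E_ok.
have [tk3|kt3] := ltrP t (k + 3); first by apply: braid_move_window; lia.
have [w wt_t] := same_off t (or_intror kt3).
exact: weighted_at_same_column w wt_t (braid_move_lab_far _ kt3) E_ok.
Qed.

End BraidMove.

Section CommMove.
Context {E E' : diagram R n} {k : int}.
Hypotheses (E_cons : consistent E) (E_ok : weighted E) (Emove : comm_move k E E').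
Let E'_cons : consistent E'. Proof. by case: Emove => _ [_ [_ [_ []]]]. Qed.
Let lab_before t : t <= k -> lab E' t =1 lab E t.
Proof. by case: Emove => _ [_ [_ [_ [_ lab_le]]]] tk q; apply: lab_le. Qed.
Let lab_k : lab E' k =1 lab E k. Proof. exact: lab_before. Qed.
Let same_off t : t < k \/ k + 2 <= t -> word E' t = word E t /\ wt E' t = wt E t.
Proof. by case: Emove => _ [_ [_ [same _]]] tk; apply: same; apply/eqP; lia. Qed.

Lemma comm_move_lab_far t : k + 2 <= t -> lab E' t =1 lab E t.
Proof.
have [dist [[w'0 w'1] _]] := Emove; have [uv uv1 vu1] := distantP dist.
apply: (eq_lab_from E_cons E'_cons) => [q | t' kt'].
  2: by case: (same_off t' (or_intror kt')).
have v'0 : (N %| (word E (k + 1))%:Z - (word E' k)%:Z)%Z by rewrite w'0 dvdz_subrr.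
have u'1 : (N %| (word E k)%:Z - (word E' (k + 1))%:Z)%Z by rewrite w'1 dvdz_subrr.
rewrite (_ : k + 2 = k + 1 + 1); last by ring.
rewrite (lab_next E'_cons _ u'1) (lab_next E'_cons _ v'0) lab_k.
rewrite (lab_next E_cons _ (dvdz_subrr (word E (k + 1))%:Z)).
rewrite (lab_next E_cons _ (dvdz_subrr (word E k)%:Z)).
by rewrite (zswap_comm _ _ _ uv uv1 vu1).
Qed.

Lemma comm_move_window t p : k <= t <= k + 1 ->
  (N %| p - (word E' t)%:Z)%Z -> weighted_at E' t p.
Proof.
have [dist [[w'0 w'1] [[wt0 wt1] _]]] := Emove; have [uv uv1 vu1] := distantP dist.
have L1 q : lab E (k + 1) q = lab E k (zswap (word E k) q) :=
  lab_next E_cons q (dvdz_subrr _).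
have v'0 : (N %| (word E (k + 1))%:Z - (word E' k)%:Z)%Z by rewrite w'0 dvdz_subrr.
have L1' q : lab E' (k + 1) q = lab E k (zswap (word E (k + 1)) q).
  by rewrite (lab_next E'_cons q v'0) lab_k.
move=> /andP[kt tk]; have [->|->] : t = k \/ t = k + 1 by lia.
- rewrite w'0 => pv; have pu1 : ~~ (N %| p - (word E k)%:Z - 1)%Z by dvdz_solve.
  apply: (weighted_at_transfer wt0 _ _ _ (E_ok _ _ pv)); rewrite ?lab_k ?L1.
  + by zswap_eval.
  + by zswap_eval.
  + move=> s ps; apply/(chamber_label_next E_cons _ _ _ _ (dvdz_subrr _) pu1).
    by apply: chamber_label_eq ps => q; rewrite lab_k.
- rewrite w'1 => pu; have pv1 : ~~ (N %| p - (word E (k + 1))%:Z - 1)%Z by dvdz_solve.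
  apply: (weighted_at_transfer wt1 _ _ _ (E_ok _ _ pu)); rewrite ?L1'.
  + by zswap_eval.
  + by zswap_eval.
  + move=> s /(chamber_label_next E'_cons _ _ _ _ v'0 pv1) ps.
    by apply: chamber_label_eq ps => q; rewrite lab_k.
Qed.

Lemma comm_move_weighted : weighted E'.
Proof.
move=> t p; have [tk|kt] := ltrP t k.
  have [w wt_t] := same_off t (or_introl tk).
  have l : lab E' t =1 lab E t by apply: lab_before; lia.
  exact: weighted_at_same_column w wt_t l E_ok.
have [tk2|kt2] := ltrP t (k + 2); first by apply: comm_move_window; lia.
have [w wt_t] := same_off t (or_intror kt2).
exact: weighted_at_same_column w wt_t (comm_move_lab_far _ kt2) E_ok.
Qed.

End CommMove.

Lemma reachable_invariant (D D' : diagram R n) : consistent D ->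
  (forall t, affine_perm (lab D t)) -> weighted D -> reachable D D' ->
  [/\ consistent D', forall t, affine_perm (lab D' t) & weighted D'].
Proof.
move=> D_cons D_aff D_ok; elim=> [|D1 D2 _ [D1_cons D1_aff D1_ok] [k [bm|cm]]] //.
- have D2_cons : consistent D2 by case: bm => _ [_ [_ [_ []]]].
  split=> //; first exact: braid_move_affine D1_aff bm.
  exact: braid_move_weighted D1_cons D1_aff D1_ok bm.
- have D2_cons : consistent D2 by case: cm => _ [_ [_ [_ []]]].
  have D2_aff : forall t, affine_perm (lab D2 t).
    by apply: (eq_lab_affine_perm D2_cons _ D1_aff) => q; case: cm => _ [_ [_ [_ [_ ->]]]].
  by split=> //; apply: comm_move_weighted D1_cons D1_ok cm.
Qed.

End Weights.

End Development.

Theorem theorem5p5 (R : realFieldType) (n : nat) (alpha : 'I_n -> R)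
    (tau : 'rV[int]_n -> R) (D : diagram R n) (t0 : int) :
  (3 <= n)%N ->
  (* W is the wiring diagram of a bi-infinite reduced word, lifted to the
     universal cover, wires labelled by their positions on the line t0 *)
  biinf_reduced (word D) ->
  consistent D ->
  (forall p, lab D t0 p = p) ->
  (* tau is a nowhere-zero cylindric BHZ datum *)
  (forall s, tau s != 0) ->
  BHZ_datum alpha tau ->
  cylindric tau ->
  (* every crossing of W carries the weight given by the formula *)
  (forall (t p : int), (p %% n)%Z = (word D t : nat)%:Z ->
     forall i j : 'I_n,
       (lab D t (p + 1) %% n)%Z = (i : nat)%:Z ->
       (lab D t p %% n)%Z = (j : nat)%:Z ->
       forall s, chamber_label (lab D) t p s ->
         wt D t = crossing_weight alpha tau i j s) ->
  (* then the same holds after any finite sequence of moves *)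
  forall D' : diagram R n, reachable D D' ->
  forall (t p : int), (p %% n)%Z = (word D' t : nat)%:Z ->
     forall i j : 'I_n,
       (lab D' t (p + 1) %% n)%Z = (i : nat)%:Z ->
       (lab D' t p %% n)%Z = (j : nat)%:Z ->
       exists s, chamber_label (lab D') t p s /\
         wt D' t = crossing_weight alpha tau i j s.
Proof.
move=> n_ge3 _ D_cons lab0 tau_neq0 tau_bhz _ D_weights D' DD' t p pw i j pi pj.
have D_aff : forall t, affine_perm n (lab D t).
  apply: (affine_perm_lab _ n_ge3 D_cons t0).
  by apply: (eq_affine_perm n _ (affine_perm_id n)) => q; rewrite lab0.
have D_ok : weighted n _ alpha tau D.
  move=> t' p' /modz_ordP pw' i' j' s /modz_ordP pi' /modz_ordP pj'.
  exact: D_weights.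
have [_ D'_aff D'_ok] :=
  reachable_invariant _ n_ge3 _ _ _ tau_neq0 tau_bhz _ _ D_cons D_aff D_ok DD'.
have [s ps] := chamber_label_exists _ n_ge3 _ _ p (D'_aff t).
by exists s; split=> //; apply: (D'_ok t p _ i j s _ _ ps); apply/modz_ordP.
Qed.
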